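(* Let $\Gamma=[\gamma;\zeta;\beta]$ and $\Gamma'=[\gamma;\zeta';\beta]$ be LR-tableaux of the same partition type $(\alpha,\beta,\gamma)$ with entries at most $2$, and let $\Delta,\Delta'$ be arc diagrams of Klein tableaux refining $\Gamma$, $\Gamma'$ respectively. (1) If $\Delta$ is obtained from $\Delta'$ by a single move of type (A) or (B), then $\Gamma=\Gamma'$. (2) If $\Delta$ is obtained from $\Delta'$ by a single move of type (C) or (D), then $\Gamma'\leq_{\rm part}\Gamma$ and $\Gamma\neq\Gamma'$.
   Context: Young diagram conventions: a partition $\lambda$ has columns of lengths $\lambda_1,\lambda_2,\ldots$, rows numbered from the top; $\bar\lambda$ is the conjugate partition. An LR-tableau of type $(\alpha,\beta,\gamma)$ with entries at most $2$ is a filling of the skew diagram $\beta\setminus\gamma$ with $\bar\alpha_1$ entries $1$ and $\bar\alpha_2$ entries $2$, weakly increasing along rows, strictly increasing down columns, and such that for each $c\ge0$ the number of $2$'s in columns to the right of column $c$ is at most the number of $1$'s there. It is encoded as $[\gamma;\zeta;\beta]$ where $\zeta$ is the shape formed by the empty boxes and the boxes $1$. Dominance order on partitions: $\zeta\le\zeta'$ if $\sum_{i=1}^\ell\zeta_i\le\sum_{i=1}^\ell\zeta'_i$ for all $\ell$; then $[\gamma;\zeta;\beta]\leq_{\rm part}[\gamma;\zeta';\beta]$ if $\zeta\le\zeta'$. A Klein tableau is an LR-tableau where each entry $2$ carries a subscript $r$ ($2_r$) such that (a) $1\le r\le m-1$ if it is in row $m$; (b) $r=m-1$ if the box above it contains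 $1$; (c) the number of $2_r$'s is at most the number of $1$'s in row $r$; it refines the LR-tableau obtained by deleting the subscripts. Its arc diagram: an arc $(m,r)$ for each $2_r$ in row $m$, and at each position $r$ as many poles as the number of $1$'s in row $r$ minus the number of arcs ending at $r$. Moves: for $m>n>r>s$, (A) replaces arcs $(m,r),(n,s)$ by $(m,s),(n,r)$; (C) replaces arcs $(m,r),(n,s)$ by $(m,n),(r,s)$; for $m>r>s$, (B) replaces arc $(m,s)$ and pole at $r$ by arc $(m,r)$ and pole at $s$; (D) replaces arc $(m,s)$ and pole at $r$ by pole at $m$ and arc $(r,s)$. *)

From mathcomp Require Import all_boot.
Set Implicit Arguments. Unset Strict Implicit. Unset Printing Implicit Defensive.

(* Conventions: a partition is a nonincreasing seq of POSITIVE nats, listing the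
   column lengths lambda_1 >= lambda_2 >= ... . Columns and rows are numbered
   from 1 (rows from the top). Box (i, j) = row i, column j. *)

Definition is_part (l : seq nat) : bool := sorted geq l && all (fun x => 0 < x) l.

(* length of column j (1-indexed); 0 beyond the last column *)
Definition colL (l : seq nat) (j : nat) : nat := nth 0 l j.-1.

Definition conj (a : seq nat) (k : nat) : nat := count (fun x => k <= x) a.

Definition subshape (l m : seq nat) : Prop := forall j, colL l j <= colL m j.

Definition inskew (g b : seq nat) (i j : nat) : bool :=
  (1 <= j) && (colL g j < i) && (i <= colL b j).

(* the filling encoded by [gamma; zeta; beta]: 1 in the boxes of zeta, 2 elsewhere *)
Definition entry (z : seq nat) (i j : nat) : nat := if i <= colL z j then 1 else 2.

Definition nrows (b : seq nat) : nat := head 0 b.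
Definition ncols (b : seq nat) : nat := size b.

Definition cnt_right (g z b : seq nat) (k c : nat) : nat :=
  \sum_(c.+1 <= j < (ncols b).+1) \sum_(0 <= i < (nrows b).+1)
     nat_of_bool (inskew g b i j && (entry z i j == k)).

Definition ones_row (g z b : seq nat) (r : nat) : nat :=
  \sum_(1 <= j < (ncols b).+1) nat_of_bool (inskew g b r j && (entry z r j == 1)).

Definition LR (a b g z : seq nat) : Prop :=
  [/\ [/\ is_part a, is_part b, is_part g & is_part z],
      all (fun x => x <= 2) a,
      subshape g z /\ subshape z b,
      (forall i j j', j < j' -> inskew g b i j -> inskew g b i j' ->
         entry z i j <= entry z i j') &
      [/\
      (forall i i' j, i < i' -> inskew g b i j -> inskew g b i' j ->
         entry z i j < entry z i' j),
      cnt_right g z b 1 0 = conj a 1,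
          cnt_right g z b 2 0 = conj a 2 &
          forall c, cnt_right g z b 2 c <= cnt_right g z b 1 c]].

(* Klein tableau: sub m j is the subscript r of the entry 2_r in box (m,j)
   (irrelevant on boxes not containing 2). *)

Definition arcsK (g z b : seq nat) (sub : nat -> nat -> nat) (m r : nat) : nat :=
  \sum_(1 <= j < (ncols b).+1)
     nat_of_bool [&& inskew g b m j, entry z m j == 2 & sub m j == r].

(* number of entries 2_r in the whole tableau = number of arcs ending at r *)
Definition arcs_to (g z b : seq nat) (sub : nat -> nat -> nat) (r : nat) : nat :=
  \sum_(0 <= m < (nrows b).+1) arcsK g z b sub m r.

Definition Klein (g z b : seq nat) (sub : nat -> nat -> nat) : Prop :=
  [/\ (forall m j, inskew g b m j -> entry z m j = 2 -> 1 <= sub m j <= m.-1),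
      (forall m j, inskew g b m j -> entry z m j = 2 ->
         inskew g b m.-1 j -> entry z m.-1 j = 1 -> sub m j = m.-1) &
      (forall r, arcs_to g z b sub r <= ones_row g z b r)].

(* arc diagrams: multiplicity of arcs (m,r) and number of poles at each position *)
Record arcdiag := ArcDiag { arcs : nat -> nat -> nat; poles : nat -> nat }.

Definition arc_diagram (g z b : seq nat) (sub : nat -> nat -> nat) : arcdiag :=
  ArcDiag (arcsK g z b sub)
          (fun r => ones_row g z b r - arcs_to g z b sub r).

Definition dl2 (m r x y : nat) : nat := nat_of_bool ((x == m) && (y == r)).
Definition dl1 (r x : nat) : nat := nat_of_bool (x == r).

(* moveX D' D : D is obtained from D' by a single move of type X *)
Definition moveA (D' D : arcdiag) : Prop :=
  exists m n r s, [/\ s < r, r < n, n < m,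
    (forall x y, arcs D x y + dl2 m r x y + dl2 n s x y
                 = arcs D' x y + dl2 m s x y + dl2 n r x y) &
    (forall x, poles D x = poles D' x)].

Definition moveB (D' D : arcdiag) : Prop :=
  exists m r s, [/\ s < r, r < m,
    (forall x y, arcs D x y + dl2 m s x y = arcs D' x y + dl2 m r x y) &
    (forall x, poles D x + dl1 r x = poles D' x + dl1 s x)].

Definition moveC (D' D : arcdiag) : Prop :=
  exists m n r s, [/\ s < r, r < n, n < m,
    (forall x y, arcs D x y + dl2 m r x y + dl2 n s x y
                 = arcs D' x y + dl2 m n x y + dl2 r s x y) &
    (forall x, poles D x = poles D' x)].

Definition moveD (D' D : arcdiag) : Prop :=
  exists m r s, [/\ s < r, r < m,
    (forall x y, arcs D x y + dl2 m s x y = arcs D' x y + dl2 r s x y) &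
    (forall x, poles D x + dl1 r x = poles D' x + dl1 m x)].

Definition dominated (z z' : seq nat) : Prop :=
  forall l, \sum_(1 <= i < l.+1) colL z i <= \sum_(1 <= i < l.+1) colL z' i.

From mathcomp Require Import all_boot zify.

Set Implicit Arguments.
Unset Strict Implicit.
Unset Printing Implicit Defensive.

(* In the tableau [gamma; zeta; beta], row y contains conj zeta y - conj gamma y
   entries 1, and for a Klein refinement these are exactly the poles at y plus
   the arcs ending at y.  Hence conj zeta y = conj gamma y + degree y, where
   degree y counts the poles and arc ends at y, so the row lengths of zeta are
   read off the arc diagram.  Moves (A) and (B) only permute arc ends and poles,
   so they preserve every degree and zeta is unchanged.  Moves (C) and (D) trade
   an arc end or pole at r for one at a larger n, i.e. move one box of zeta from
   row r down to row n, which raises zeta in the dominance order of its column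
   lengths. *)

Lemma sorted_nth_le_head s i : sorted geq s -> nth 0 s i <= head 0 s.
Proof.
case: s => [|x s] //= hp; case: i => [|i] //=.
case: (ltnP i (size s)) => hi; last by rewrite nth_default.
exact: (allP (order_path_min (rev_trans leq_trans) hp)) _ (mem_nth 0 hi).
Qed.

Lemma leq_nth_conj s y j : sorted geq s -> 0 < y ->
  (y <= nth 0 s j) = (j < conj s y).
Proof.
elim: s j => [|x s IH] j /=; first by rewrite /conj /= nth_nil; case: y.
move=> hp hy; have ss := path_sorted hp.
have conj0 : x < y -> conj s y = 0.
  move=> hxy; apply/eqP; rewrite -leqn0 leqNgt -has_count; apply/hasPn => w ws /=.
  have /= hwx := (allP (order_path_min (rev_trans leq_trans) hp)) w ws.
  by rewrite -ltnNge (leq_ltn_trans hwx hxy).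
rewrite /conj /= -/(conj s y); case: (leqP y x) => hxy; case: j => [|j] //=.
- by rewrite add1n ltnS IH.
- by rewrite conj0 // leqNgt hxy.
- rewrite conj0 // ltn0; apply/negbTE; rewrite -ltnNge.
  by rewrite (leq_ltn_trans (sorted_nth_le_head j.+1 (hp : sorted geq (x :: s)))).
Qed.

Lemma conj_subshape s t y : sorted geq s -> sorted geq t -> subshape s t ->
  0 < y -> conj s y <= conj t y.
Proof.
move=> ss st sst hy; case e: (conj s y) => [|k] //.
have : y <= nth 0 s k by rewrite leq_nth_conj // e.
by move/leq_trans/(_ (sst k.+1)); rewrite leq_nth_conj.
Qed.

Lemma conj_inj s t : is_part s -> is_part t ->
  (forall y, 0 < y -> conj s y = conj t y) -> s = t.
Proof.
move=> /andP[ss ps] /andP[st pt] conjE.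
have nthE j : nth 0 s j = nth 0 t j.
  have le u v : sorted geq u -> sorted geq v ->
      (forall y, 0 < y -> conj u y = conj v y) -> nth 0 u j <= nth 0 v j.
    move=> su sv uv; case e: (nth 0 u j) => [|y] //.
    have : y.+1 <= nth 0 u j by rewrite e.
    by rewrite leq_nth_conj // uv // -leq_nth_conj.
  by apply/eqP; rewrite eqn_leq !le // => y hy; rewrite conjE.
have conj1 u : all (fun x => 0 < x) u -> conj u 1 = size u.
  by move=> pu; apply/eqP; rewrite -all_count.
apply: (eq_from_nth (x0 := 0)) => [|i _]; last exact: nthE.
by rewrite -conj1 // -[size t]conj1 // conjE.
Qed.

Lemma sum_lt_minn K c : \sum_(0 <= i < K) (i < c) = minn c K.
Proof.
elim: K => [|K IH]; first by rewrite big_geq // minn0.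
by rewrite big_nat_recr //= IH; case: (ltnP K c) => h /=; lia.
Qed.

Lemma sum_colL_conj s l N : sorted geq s -> head 0 s <= N ->
  \sum_(1 <= i < l.+1) colL s i = \sum_(0 <= y < N) minn (conj s y.+1) l.
Proof.
move=> ss hN; rewrite big_add1 /=.
transitivity (\sum_(0 <= i < l) \sum_(0 <= y < N) (i < conj s y.+1)).
  apply: eq_bigr => i _; rewrite /colL /=.
  rewrite -[LHS](minn_idPl (leq_trans (sorted_nth_le_head i ss) hN)) -sum_lt_minn.
  by apply: eq_bigr => y _; rewrite leq_nth_conj.
by rewrite exchange_big_nat; apply: eq_bigr => y _; rewrite sum_lt_minn.
Qed.

Lemma sum_delta K m c : \sum_(0 <= x < K) ((x == m) * c) = (m < K) * c.
Proof.
elim: K => [|K IH]; first by rewrite big_geq.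
rewrite big_nat_recr //= IH ltnS [K == m]eq_sym.
by case: (ltngtP m K) => h /=; lia.
Qed.

(* conj s y is the length of row y, so the hypothesis moves one box of s from
   row r down to row n. *)
Lemma dominated_box_down s t r n : sorted geq s -> sorted geq t ->
  0 < r -> r < n ->
  (forall y, 0 < y -> conj s y + (y == r) = conj t y + (y == n)) ->
  dominated t s.
Proof.
move=> ss st hr hrn conjE l.
have := conjE r hr; have := conjE n (ltn_trans hr hrn).
rewrite !eqxx (gtn_eqF hrn) (ltn_eqF hrn) => conjEn conjEr.
have conj_mono : conj s n <= conj s r.
  by apply: sub_count => w /=; exact: leq_trans (ltnW hrn).
set N := maxn (head 0 s) (head 0 t).
have hnN : n <= N.
  apply: leq_trans (leq_maxl _ _).
  by rewrite -nth0 leq_nth_conj ?(ltn_trans hr hrn) //; lia.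
rewrite (@sum_colL_conj s l N ss (leq_maxl _ _)).
rewrite (@sum_colL_conj t l N st (leq_maxr _ _)).
have pointE y : minn (conj s y.+1) l + (y == r.-1) * minn (conj t r) l
                  + (y == n.-1) * minn (conj t n) l
              = minn (conj t y.+1) l + (y == r.-1) * minn (conj s r) l
                  + (y == n.-1) * minn (conj s n) l.
  have := conjE y.+1 (ltn0Sn y).
  rewrite -(eqSS y) -(eqSS y) !prednK ?(ltn_trans hr hrn) //.
  case: (@eqP _ y.+1 r) => [<-|_]; case: (@eqP _ y.+1 n) => [<-|_] /=; lia.
have := @eq_big_nat _ 0 addn 0 N _ _ (fun y _ => pointE y).
have [hr1 hn1] : r.-1 < N /\ n.-1 < N by lia.
by rewrite !big_split /= !sum_delta hr1 hn1 !mul1n; lia.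
Qed.

Definition degree (D : arcdiag) (K y : nat) : nat :=
  poles D y + \sum_(0 <= x < K) arcs D x y.

Definition arcs_below (D : arcdiag) (K : nat) : Prop :=
  forall x y, K <= x -> arcs D x y = 0.

Lemma arcs_below_lt D K x y : arcs_below D K -> 0 < arcs D x y -> x < K.
Proof. by move=> below; rewrite [x < K]ltnNge; apply: contraTN => /below ->. Qed.

Lemma sum_dl2 K m r y : m < K -> \sum_(0 <= x < K) dl2 m r x y = (y == r).
Proof.
move=> hm; rewrite (eq_bigr (fun x => (x == m) * (y == r))).
  by rewrite sum_delta hm mul1n.
by move=> x _; rewrite /dl2 mulnb.
Qed.

Lemma sum_arcs_balance D D' K y f f' :
    (forall x, arcs D x y + f x = arcs D' x y + f' x) ->
  \sum_(0 <= x < K) arcs D x y + \sum_(0 <= x < K) f x =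
  \sum_(0 <= x < K) arcs D' x y + \sum_(0 <= x < K) f' x.
Proof. by move=> arcsE; rewrite -!big_split; apply: eq_bigr => x _. Qed.

Lemma moveAB_degree D' D K : arcs_below D' K ->
  moveA D' D \/ moveB D' D -> degree D K =1 degree D' K.
Proof.
move=> below [[m [n [r [s [hsr hrn hnm arcsE polesE]]]]]
             |[m [r [s [hsr hrm arcsE polesE]]]]] y.
- have hmK : m < K.
    by apply: (arcs_below_lt (y := r) below); have := arcsE m r; rewrite /dl2; lia.
  have := @sum_arcs_balance D D' K y _ _
            (fun x => etrans (addnA _ _ _) (etrans (arcsE x y) (esym (addnA _ _ _)))).
  rewrite !big_split /= !sum_dl2 ?(ltn_trans hnm hmK) // /degree polesE; lia.
- have hmK : m < K.
    by apply: (arcs_below_lt (y := s) below); have := arcsE m s; rewrite /dl2; lia.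
  have := @sum_arcs_balance D D' K y (dl2 m s ^~ y) (dl2 m r ^~ y) (arcsE^~ y).
  rewrite !sum_dl2 // /degree; have := polesE y; rewrite /dl1; lia.
Qed.

Lemma moveCD_degree D' D K : arcs_below D' K ->
  moveC D' D \/ moveD D' D ->
  exists r n, [/\ 0 < r, r < n &
    forall y, degree D K y + (y == r) = degree D' K y + (y == n)].
Proof.
move=> below [[m [n [r [s [hsr hrn hnm arcsE polesE]]]]]
             |[m [r [s [hsr hrm arcsE polesE]]]]].
- have hmK : m < K.
    by apply: (arcs_below_lt (y := r) below); have := arcsE m r; rewrite /dl2; lia.
  exists r, n; split=> [||y]; [exact: leq_ltn_trans hsr | exact: hrn |].
  have := @sum_arcs_balance D D' K y _ _
            (fun x => etrans (addnA _ _ _) (etrans (arcsE x y) (esym (addnA _ _ _)))).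
  have hnK := ltn_trans hnm hmK; have hrK := ltn_trans hrn hnK.
  by rewrite !big_split /= !sum_dl2 // /degree polesE; lia.
- have hmK : m < K.
    by apply: (arcs_below_lt (y := s) below); have := arcsE m s; rewrite /dl2; lia.
  exists r, m; split=> [||y]; [exact: leq_ltn_trans hsr | exact: hrm |].
  have := @sum_arcs_balance D D' K y (dl2 m s ^~ y) (dl2 r s ^~ y) (arcsE^~ y).
  rewrite !sum_dl2 ?(ltn_trans hrm hmK) // /degree; have := polesE y; rewrite /dl1; lia.
Qed.

Lemma sum_interval K a c : a <= c -> c <= K ->
  \sum_(0 <= i < K) ((a <= i) && (i < c)) + a = c.
Proof.
move=> hac hcK.
rewrite -{2}(minn_idPl (leq_trans hac hcK)) -sum_lt_minn -big_split /=.
rewrite -[RHS](minn_idPl hcK) -sum_lt_minn; apply: eq_bigr => i _.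
by case: (leqP a i) => hai /=; lia.
Qed.

Lemma ones_row_conj a b g z r : LR a b g z -> 0 < r ->
  ones_row g z b r + conj g r = conj z r.
Proof.
case=> [[_ /andP[sb _] /andP[sg _] /andP[sz _]] _ [hgz hzb] _ _] hr.
have hzK : conj z r <= ncols b.
  exact: leq_trans (conj_subshape sz sb hzb hr) (count_size _ _).
rewrite -(sum_interval (conj_subshape sg sz hgz hr) hzK) /ones_row big_add1 /=.
congr (_ + _); apply: eq_bigr => i _.
rewrite /inskew /entry /colL /= [conj g r <= i]leqNgt -!leq_nth_conj // -ltnNge.
case: (leqP r (nth 0 z i)) => hz /=; last by rewrite !andbF.
by rewrite (leq_trans hz (hzb i.+1) : r <= nth 0 b i) !andbT.
Qed.

Lemma arcsK_below g z b sub : sorted geq b ->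
  arcs_below (arc_diagram g z b sub) (nrows b).+1.
Proof.
move=> sb x y; rewrite ltnNge => hx; rewrite /= /arcsK big1 // => j _.
apply/eqP; rewrite eqb0; apply: contraNN hx => /and3P[/andP[_ hxb] _ _].
exact: leq_trans hxb (sorted_nth_le_head _ sb).
Qed.

Lemma conj_degree a b g z sub y : LR a b g z -> Klein g z b sub -> 0 < y ->
  conj z y = conj g y + degree (arc_diagram g z b sub) (nrows b).+1 y.
Proof.
move=> hL [_ _ arcs_toP] hy.
by rewrite -(ones_row_conj hL hy) addnC /degree /= subnK // arcs_toP.
Qed.

Theorem lemma2p5 (alpha beta gamma zeta zeta' : seq nat)
    (sub sub' : nat -> nat -> nat) :
  LR alpha beta gamma zeta -> LR alpha beta gamma zeta' ->
  Klein gamma zeta beta sub -> Klein gamma zeta' beta sub' ->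
  ((moveA (arc_diagram gamma zeta' beta sub') (arc_diagram gamma zeta beta sub) \/
    moveB (arc_diagram gamma zeta' beta sub') (arc_diagram gamma zeta beta sub)) ->
     zeta = zeta') /\
  ((moveC (arc_diagram gamma zeta' beta sub') (arc_diagram gamma zeta beta sub) \/
    moveD (arc_diagram gamma zeta' beta sub') (arc_diagram gamma zeta beta sub)) ->
     dominated zeta' zeta /\ zeta <> zeta').
Proof.
move=> hL hL' hK hK'.
have [[_ /andP[sb _] _ pz] _ _ _ _] := hL.
have [[_ _ _ pz'] _ _ _ _] := hL'.
have below := arcsK_below gamma zeta' sub' sb.
have conjE := conj_degree hL hK; have conjE' := conj_degree hL' hK'.
split=> [/(moveAB_degree below) degreeE | /(moveCD_degree below) [r [n [hr hrn degreeE]]]].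
  by apply: (conj_inj pz pz') => y hy; rewrite conjE // conjE' // degreeE.
have shiftE y : 0 < y -> conj zeta y + (y == r) = conj zeta' y + (y == n).
  by move=> hy; rewrite conjE // conjE' // -addnA degreeE addnA.
have [[sz _] [sz' _]] := (andP pz, andP pz').
split; first exact: dominated_box_down sz sz' hr hrn shiftE.
move=> ezz; have := shiftE r hr; rewrite ezz eqxx (ltn_eqF hrn); lia.
Qed.
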